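(* Consider a tabular finite MDP and a full-support policy $\pi$. Let $\pi'(a|s)=\pi(a|s)e^{\eta f_a(s)}/Z_s$ with $\eta>0$, where $f_a(s):=[U_a(s)]_+$ and $Z_s:=\sum_{a'}\pi(a'|s)e^{\eta f_{a'}(s)}$. Then \[ V(\pi')-V(\pi)=\frac{1}{1-\gamma}\sum_{s\in\mathcal S}d_\rho^{\pi'}(s)\,\frac1{Z_s}\sum_{i:\,U_i(s)>0}\pi(i|s)U_i(s)\big(e^{\eta U_i(s)}-1\big)\;\ge\;0. \]
   Context: A finite MDP $(\mathcal S,\mathcal A,P,r,\gamma,\rho)$ with $\gamma\in[0,1)$; $V^\pi,Q^\pi$ discounted value functions, $V(\pi)=\mathbb{E}_{s\sim\rho}V^\pi(s)$, $d_\rho^\pi(s)=(1-\gamma)\sum_{t\ge0}\gamma^t\Pr(s_t=s\mid\rho,\pi)$. $U_a(s):=Q^\pi(s,a)-V^\pi(s)$ (advantage under the current policy $\pi$), $[x]_+=\max(x,0)$. *)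

From mathcomp Require Import all_boot all_order all_algebra.
From mathcomp Require Import all_classical all_reals all_analysis.
Import Order.TTheory GRing.Theory Num.Theory.
Import numFieldNormedType.Exports.
Local Open Scope ring_scope.

Set Implicit Arguments.
Unset Strict Implicit.
Unset Printing Implicit Defensive.

Section TabularMDP.
Context {R : realType} {S A : finType}.
(* transition kernel P(s'|s,a) = P s a s', reward r(s,a), discount gamma *)
Variables (P : S -> A -> S -> R) (r : S -> A -> R) (gamma : R).

Definition policy := S -> A -> R.

(* state_prob pi t s0 s = Pr(s_t = s | s_0 = s0, pi) *)
Fixpoint state_prob (pi : policy) (t : nat) (s0 s : S) : R :=
  match t with
  | 0 => (s0 == s)%:R
  | t'.+1 => \sum_(s' : S) state_prob pi t' s0 s' * \sum_(a : A) pi s' a * P s' a s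
  end.

Definition exp_reward (pi : policy) (t : nat) (s0 : S) : R :=
  \sum_(s : S) state_prob pi t s0 s * \sum_(a : A) pi s a * r s a.

(* V^pi(s) = E[ sum_t gamma^t r(s_t,a_t) | s_0 = s ]  (real series, as the limit
   of partial sums; convergent since gamma < 1 and everything is finite) *)
Definition Vfun (pi : policy) (s0 : S) : R :=
  limn (series (fun t : nat => gamma ^+ t * exp_reward pi t s0)).

Definition Qfun (pi : policy) (s : S) (a : A) : R :=
  r s a + gamma * \sum_(s' : S) P s a s' * Vfun pi s'.

Definition Adv (pi : policy) (s : S) (a : A) : R := Qfun pi s a - Vfun pi s.

Definition Vrho (rho : S -> R) (pi : policy) : R := \sum_(s : S) rho s * Vfun pi s.

Definition dvisit (rho : S -> R) (pi : policy) (s : S) : R :=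
  (1 - gamma) * limn (series (fun t : nat =>
     gamma ^+ t * \sum_(s0 : S) rho s0 * state_prob pi t s0 s)).

Definition pos_part (x : R) : R := Num.max x 0.

Definition fpos (pi : policy) (s : S) (a : A) : R := pos_part (Adv pi s a).

Definition Zs (pi : policy) (eta : R) (s : S) : R :=
  \sum_(a : A) pi s a * expR (eta * fpos pi s a).

Definition pi_update (pi : policy) (eta : R) : policy :=
  fun s a => pi s a * expR (eta * fpos pi s a) / Zs pi eta s.

End TabularMDP.

From mathcomp Require Import all_boot all_order all_algebra.
From mathcomp Require Import all_classical all_reals all_analysis.
From mathcomp Require Import ring.
Import Order.TTheory GRing.Theory Num.Theory.
Import numFieldNormedType.Exports.
Local Open Scope ring_scope.

(* The performance difference lemma: V^pi' - V^pi is the value of pi' for the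
   reward U (the advantage of pi), because W := V^pi' - V^pi - V_U^pi' satisfies
   W = gamma P_pi' W and the discounted transition operator is a contraction.
   By the occupancy-measure formula, the rho-average of V_U^pi' is
   (1 - gamma)^-1 sum_s d_rho^pi'(s) E_{a ~ pi'(.|s)} U_a(s).  Since
   E_{a ~ pi(.|s)} U_a(s) = 0, reweighting pi by exp(eta [U]_+) / Z_s turns that
   inner expectation into Z_s^-1 sum_{U_i > 0} pi_i U_i (exp(eta U_i) - 1) >= 0. *)

Section SeriesFacts.
Context {R : realType}.

Lemma series_geometric_dominated_cvg (u : R^nat) (C g : R) : 0 <= g -> g < 1 ->
  (forall t, `|u t| <= C * g ^+ t) -> cvgn (series u).
Proof.
move=> g0 g1 u_le.
have C0 : 0 <= C by have := u_le 0%N; rewrite expr0 mulr1; apply: le_trans.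
apply: normed_cvg; apply: (@series_le_cvg _ _ (geometric C g)) => //= n.
by rewrite mulr_ge0 // exprn_ge0.
by apply: is_cvg_geometric_series; rewrite ger0_norm.
Qed.

Lemma cvgn_sum_scale (I : finType) (c : I -> R) (u : I -> R^nat) :
  (forall i, cvgn (u i)) ->
  (\sum_i c i * u i n @[n --> \oo] --> \sum_i c i * limn (u i))%classic.
Proof.
move=> u_cvg; apply: (@cvg_big _ _ +%R 0 xpredT add_continuous) => // i _.
exact: cvgMl_tmp (u_cvg i).
Qed.

Lemma limn_sum_scale (I : finType) (c : I -> R) (u : I -> R^nat) :
  (forall i, cvgn (u i)) ->
  limn (fun n => \sum_i c i * u i n) = \sum_i c i * limn (u i).
Proof. by move=> u_cvg; apply/cvg_lim/cvgn_sum_scale. Qed.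

Lemma sum_scale_series (I : finType) (c : I -> R) (u : I -> R^nat) n :
  \sum_i c i * series (u i) n = series (fun t => \sum_i c i * u i t) n.
Proof.
rewrite /series /=; under eq_bigr do rewrite mulr_sumr.
exact: exchange_big.
Qed.

Lemma limn_series_ge0 (u : R^nat) :
  cvgn (series u) -> (forall n, 0 <= u n) -> 0 <= limn (series u).
Proof.
move=> u_cvg u_ge0; apply: limr_ge => //; near=> n.
by apply: sumr_ge0 => i _.
Unshelve. all: by end_near. Qed.

End SeriesFacts.

Section KroneckerDelta.
Context {R : pzSemiRingType} {I : finType}.

Lemma sum_delta_l (a : I) (F : I -> R) :
  \sum_x (a == x)%:R * F x = F a.
Proof.
rewrite (bigD1 a) //= eqxx mul1r big1 ?addr0 // => x /negbTE.
by rewrite eq_sym => ->; rewrite mul0r.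
Qed.

Lemma sum_delta_r (a : I) (F : I -> R) :
  \sum_x F x * (x == a)%:R = F a.
Proof.
rewrite (bigD1 a) //= eqxx mulr1 big1 ?addr0 // => x /negbTE ->.
by rewrite mulr0.
Qed.

End KroneckerDelta.

Section TabularMDP.
Context {R : realType} {S A : finType}.
Variables (P : S -> A -> S -> R) (gamma : R).
Hypothesis P_ge0 : forall s a s', 0 <= P s a s'.
Hypothesis P_sum1 : forall s a, \sum_s' P s a s' = 1.
Hypothesis gamma_ge0 : 0 <= gamma.
Hypothesis gamma_lt1 : gamma < 1.

Definition policy_trans (pi : S -> A -> R) (s s' : S) : R :=
  \sum_a pi s a * P s a s'.

Definition policy_reward (r : S -> A -> R) (pi : S -> A -> R) (s : S) : R :=
  \sum_a pi s a * r s a.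

Lemma sum_policy_trans (pi : S -> A -> R) (v : S -> R) s :
  \sum_s' policy_trans pi s s' * v s' = \sum_a pi s a * \sum_s' P s a s' * v s'.
Proof.
under eq_bigr do rewrite mulr_suml.
rewrite exchange_big /=; apply: eq_bigr => a _; rewrite mulr_sumr.
by apply: eq_bigr => s' _; rewrite mulrA.
Qed.

Lemma state_probS (pi : S -> A -> R) t s0 s :
  state_prob P pi t.+1 s0 s = \sum_s' state_prob P pi t s0 s' * policy_trans pi s' s.
Proof. by []. Qed.

Lemma state_probSl (pi : S -> A -> R) t s0 s :
  state_prob P pi t.+1 s0 s = \sum_s' policy_trans pi s0 s' * state_prob P pi t s' s.
Proof.
elim: t s0 s => [|t IH] s0 s; first by rewrite /= sum_delta_l sum_delta_r.
rewrite state_probS; under eq_bigr do rewrite IH mulr_suml.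
rewrite exchange_big /=; apply: eq_bigr => s' _.
by rewrite mulr_sumr; apply: eq_bigr => s'' _; rewrite mulrA.
Qed.

Lemma exp_reward0 (pi : S -> A -> R) r s0 :
  exp_reward P r pi 0 s0 = policy_reward r pi s0.
Proof. by rewrite /exp_reward /= sum_delta_l. Qed.

Lemma exp_rewardS (pi : S -> A -> R) r t s0 :
  exp_reward P r pi t.+1 s0 = \sum_s' policy_trans pi s0 s' * exp_reward P r pi t s'.
Proof.
rewrite /exp_reward; under eq_bigr do rewrite state_probSl mulr_suml.
rewrite exchange_big /=; apply: eq_bigr => s' _.
by rewrite mulr_sumr; apply: eq_bigr => s _; rewrite mulrA.
Qed.

Section StochasticPolicy.
Variable pi : S -> A -> R.
Hypothesis pi_ge0 : forall s a, 0 <= pi s a.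
Hypothesis pi_sum1 : forall s, \sum_a pi s a = 1.

Lemma policy_trans_ge0 s s' : 0 <= policy_trans pi s s'.
Proof. by apply: sumr_ge0 => a _; rewrite mulr_ge0. Qed.

Lemma policy_trans_sum1 s : \sum_s' policy_trans pi s s' = 1.
Proof.
rewrite exchange_big /= -[RHS](pi_sum1 s); apply: eq_bigr => a _.
by rewrite -mulr_sumr P_sum1 mulr1.
Qed.

Lemma state_prob_ge0 t s0 s : 0 <= state_prob P pi t s0 s.
Proof.
elim: t s0 s => [|t IH] s0 s /=; first by rewrite ler0n.
by apply: sumr_ge0 => s' _; rewrite mulr_ge0 ?policy_trans_ge0.
Qed.

Lemma state_prob_sum1 t s0 : \sum_s state_prob P pi t s0 s = 1.
Proof.
elim: t s0 => [|t IH] s0.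
  by rewrite -[RHS](sum_delta_l s0 (fun=> 1)); apply: eq_bigr => s _; rewrite mulr1.
under eq_bigr do rewrite state_probSl.
rewrite exchange_big /= -[RHS](policy_trans_sum1 s0); apply: eq_bigr => s' _.
by rewrite -mulr_sumr IH mulr1.
Qed.

Lemma state_prob_le1 t s0 s : state_prob P pi t s0 s <= 1.
Proof.
rewrite -(state_prob_sum1 t s0) (bigD1 s) //= lerDl.
by apply: sumr_ge0 => *; apply: state_prob_ge0.
Qed.

Lemma norm_exp_reward_le r t s0 :
  `|exp_reward P r pi t s0| <= \sum_s `|policy_reward r pi s|.
Proof.
apply: le_trans (ler_norm_sum _ _ _) _.
rewrite -[X in _ <= X]mul1r -(state_prob_sum1 t s0) mulr_suml.
apply: ler_sum => s _; rewrite normrM ger0_norm ?state_prob_ge0 //.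
rewrite ler_wpM2l ?state_prob_ge0 // (bigD1 s) //= lerDl.
by apply: sumr_ge0 => *; apply: normr_ge0.
Qed.

Lemma Vfun_series_cvg r s0 :
  cvgn (series (fun t => gamma ^+ t * exp_reward P r pi t s0)).
Proof.
apply: (@series_geometric_dominated_cvg _ _ (\sum_s `|policy_reward r pi s|) _
  gamma_ge0 gamma_lt1) => t.
rewrite normrM ger0_norm ?exprn_ge0 // mulrC ler_wpM2r ?exprn_ge0 //.
exact: norm_exp_reward_le.
Qed.

Lemma Vfun_bellman r s0 : Vfun P r gamma pi s0 =
  policy_reward r pi s0 + gamma * \sum_s' policy_trans pi s0 s' * Vfun P r gamma pi s'.
Proof.
apply: cvg_lim => //; rewrite -cvg_shiftS.
have shift_series n :
    series (fun t => gamma ^+ t * exp_reward P r pi t s0) n.+1 =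
    policy_reward r pi s0 + \sum_s' (gamma * policy_trans pi s0 s') *
      series (fun t => gamma ^+ t * exp_reward P r pi t s') n.
  rewrite /series /= big_nat_recl // expr0 mul1r exp_reward0; congr (_ + _).
  under eq_bigr do rewrite exp_rewardS mulr_sumr.
  rewrite exchange_big /=; apply: eq_bigr => s' _.
  by rewrite mulr_sumr; apply: eq_bigr => k _; rewrite exprS; ring.
under eq_fun do rewrite shift_series.
rewrite mulr_sumr; under eq_bigr do rewrite mulrA.
apply: cvgD; first exact: cvg_cst.
by apply: cvgn_sum_scale => s'; apply: Vfun_series_cvg.
Qed.

(* A maximiser m of |x| gives |x m| <= gamma |x m|, hence x m = 0. *)
Lemma discounted_fixpoint_eq0 (x : S -> R) :
  (forall s, x s = gamma * \sum_s' policy_trans pi s s' * x s') -> forall s, x s = 0.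
Proof.
move=> x_fix s.
have [m _ m_max] := @arg_maxP _ _ S s xpredT (fun s => `|x s|) isT.
have xm_le : `|x m| <= gamma * `|x m|.
  rewrite {1}x_fix normrM ger0_norm // ler_wpM2l //.
  apply: le_trans (ler_norm_sum _ _ _) _.
  rewrite -[X in _ <= X]mul1r -(policy_trans_sum1 m) mulr_suml.
  apply: ler_sum => s' _; rewrite normrM ger0_norm ?policy_trans_ge0 //.
  by rewrite ler_wpM2l ?policy_trans_ge0 //; apply: m_max.
have xm_le0 : `|x m| <= 0.
  have : (1 - gamma) * `|x m| <= 0 by rewrite mulrBl mul1r subr_le0.
  by rewrite pmulr_rle0 ?subr_gt0.
by apply/eqP; rewrite -normr_le0; apply: le_trans xm_le0; apply: m_max.
Qed.

Lemma dvisit_series_cvg (rho : S -> R) s :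
  cvgn (series (fun t => gamma ^+ t * \sum_s0 rho s0 * state_prob P pi t s0 s)).
Proof.
apply: (@series_geometric_dominated_cvg _ _ (\sum_s0 `|rho s0|) _
  gamma_ge0 gamma_lt1) => t.
rewrite normrM ger0_norm ?exprn_ge0 // mulrC ler_wpM2r ?exprn_ge0 //.
apply: le_trans (ler_norm_sum _ _ _) _; apply: ler_sum => s0 _.
by rewrite normrM (ger0_norm (state_prob_ge0 _ _ _)) ler_piMr ?state_prob_le1.
Qed.

Lemma dvisit_ge0 (rho : S -> R) s :
  (forall s0, 0 <= rho s0) -> 0 <= dvisit P gamma rho pi s.
Proof.
move=> rho_ge0; rewrite mulr_ge0 ?subr_ge0 ?(ltW gamma_lt1) //.
apply: limn_series_ge0; first exact: dvisit_series_cvg.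
move=> t; rewrite mulr_ge0 ?exprn_ge0 //.
by apply: sumr_ge0 => s0 _; rewrite mulr_ge0 ?state_prob_ge0.
Qed.

Lemma Vrho_dvisit r (rho : S -> R) : Vrho P r gamma rho pi =
  (1 - gamma)^-1 * \sum_s dvisit P gamma rho pi s * policy_reward r pi s.
Proof.
have gamma_neq1 : 1 - gamma != 0 by rewrite subr_eq0 eq_sym lt_eqF.
pose V s := series (fun t => gamma ^+ t * exp_reward P r pi t s).
pose D s := series (fun t => gamma ^+ t * \sum_s0 rho s0 * state_prob P pi t s0 s).
have -> : \sum_s dvisit P gamma rho pi s * policy_reward r pi s =
    (1 - gamma) * \sum_s policy_reward r pi s * limn (D s).
  by rewrite mulr_sumr; apply: eq_bigr => s _; rewrite /dvisit /D; ring.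
rewrite mulKf // -(limn_sum_scale _ _ D); last exact: dvisit_series_cvg.
rewrite -[Vrho _ _ _ _ _]/(\sum_s rho s * limn (V s)).
rewrite -(limn_sum_scale _ _ V); last exact: Vfun_series_cvg.
congr (limn _); apply/funext => n; rewrite !sum_scale_series.
congr (series _ n); apply/funext => t.
transitivity (\sum_s0 \sum_s
    rho s0 * gamma ^+ t * state_prob P pi t s0 s * policy_reward r pi s).
  apply: eq_bigr => s0 _; rewrite /exp_reward !mulr_sumr.
  by apply: eq_bigr => s _; rewrite /policy_reward; ring.
rewrite exchange_big; apply: eq_bigr => s _; rewrite !mulr_sumr.
by apply: eq_bigr => s0 _; ring.
Qed.

End StochasticPolicy.

Lemma policy_reward_Adv (pi q : S -> A -> R) r s : \sum_a q s a = 1 ->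
  policy_reward (Adv P r gamma pi) q s = policy_reward r q s +
    gamma * \sum_s' policy_trans q s s' * Vfun P r gamma pi s' - Vfun P r gamma pi s.
Proof.
move=> q_sum1; rewrite sum_policy_trans mulr_sumr /policy_reward.
rewrite -[Vfun _ _ _ _ s]mul1r -q_sum1 mulr_suml -big_split -sumrB /=.
by apply: eq_bigr => a _; rewrite /Adv /Qfun; ring.
Qed.

Lemma policy_reward_Adv_self (pi : S -> A -> R) r s :
  (forall s a, 0 <= pi s a) -> (forall s, \sum_a pi s a = 1) ->
  policy_reward (Adv P r gamma pi) pi s = 0.
Proof.
by move=> pi_ge0 pi_sum1; rewrite policy_reward_Adv // -Vfun_bellman // subrr.
Qed.

Lemma performance_difference (pi pi' : S -> A -> R) r s :
  (forall s a, 0 <= pi s a) -> (forall s, \sum_a pi s a = 1) ->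
  (forall s a, 0 <= pi' s a) -> (forall s, \sum_a pi' s a = 1) ->
  Vfun P r gamma pi' s - Vfun P r gamma pi s = Vfun P (Adv P r gamma pi) gamma pi' s.
Proof.
move=> pi_ge0 pi_sum1 pi'_ge0 pi'_sum1; apply/eqP; rewrite -subr_eq0; apply/eqP.
pose W s := Vfun P r gamma pi' s - Vfun P r gamma pi s -
  Vfun P (Adv P r gamma pi) gamma pi' s.
apply: (@discounted_fixpoint_eq0 _ pi'_ge0 pi'_sum1 W) => {}s; rewrite /W.
under eq_bigr do rewrite !mulrBr; rewrite !sumrB.
rewrite {1}Vfun_bellman // {1}(Vfun_bellman _ pi'_ge0 pi'_sum1 (Adv P r gamma pi)).
by rewrite policy_reward_Adv //; ring.
Qed.

Lemma Vrho_sub (pi pi' : S -> A -> R) r (rho : S -> R) :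
  (forall s a, 0 <= pi s a) -> (forall s, \sum_a pi s a = 1) ->
  (forall s a, 0 <= pi' s a) -> (forall s, \sum_a pi' s a = 1) ->
  Vrho P r gamma rho pi' - Vrho P r gamma rho pi =
    Vrho P (Adv P r gamma pi) gamma rho pi'.
Proof.
move=> pi_ge0 pi_sum1 pi'_ge0 pi'_sum1; rewrite /Vrho -sumrB.
by apply: eq_bigr => s _; rewrite -mulrBr performance_difference.
Qed.

End TabularMDP.

Section SoftmaxUpdate.
Context {R : realType} {S A : finType}.
Variables (P : S -> A -> S -> R) (r : S -> A -> R) (gamma : R).
Variables (pi : S -> A -> R) (eta : R).
Hypothesis pi_ge0 : forall s a, 0 <= pi s a.
Hypothesis pi_sum1 : forall s, \sum_a pi s a = 1.
Hypothesis eta_ge0 : 0 <= eta.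

Local Notation U := (Adv P r gamma pi).

Lemma Zs_ge1 s : 1 <= Zs P r gamma pi eta s.
Proof.
rewrite -(pi_sum1 s); apply: ler_sum => a _; rewrite ler_peMr ?pi_ge0 //.
by rewrite -expR0 ler_expR mulr_ge0 // le_max lexx orbT.
Qed.

Lemma Zs_gt0 s : 0 < Zs P r gamma pi eta s.
Proof. exact: lt_le_trans ltr01 (Zs_ge1 s). Qed.

Lemma pi_update_ge0 s a : 0 <= pi_update P r gamma pi eta s a.
Proof. by rewrite divr_ge0 ?mulr_ge0 ?expR_ge0 // ltW ?Zs_gt0. Qed.

Lemma pi_update_sum1 s : \sum_a pi_update P r gamma pi eta s a = 1.
Proof. by rewrite -mulr_suml divff // gt_eqF ?Zs_gt0. Qed.

(* The exp(eta [U]_+) factor is 1 wherever U <= 0, so subtracting the zero mean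
   sum_a pi U leaves only the positive-advantage actions. *)
Lemma policy_reward_Adv_pi_update s :
  \sum_a pi s a * U s a = 0 ->
  policy_reward U (pi_update P r gamma pi eta) s = (Zs P r gamma pi eta s)^-1 *
    \sum_(i | 0 < U s i) pi s i * U s i * (expR (eta * U s i) - 1).
Proof.
move=> U_mean0.
transitivity ((Zs P r gamma pi eta s)^-1 *
    \sum_a pi s a * expR (eta * fpos P r gamma pi s a) * U s a).
  by rewrite /policy_reward mulr_sumr; apply: eq_bigr => a _; rewrite /pi_update; ring.
congr (_ * _).
transitivity (\sum_a pi s a * expR (eta * fpos P r gamma pi s a) * U s a -
    \sum_a pi s a * U s a); first by rewrite U_mean0 subr0.
rewrite -sumrB [RHS]big_mkcond /=; apply: eq_bigr => a _.
rewrite /fpos /pos_part -/(U s a); case: ifP => [U_gt0|U_le0].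
  by rewrite max_l ?ltW //; ring.
by rewrite max_r ?leNgt ?U_le0 // mulr0 expR0 mulr1 subrr.
Qed.

Lemma softmax_gain_ge0 s :
  0 <= (Zs P r gamma pi eta s)^-1 *
    \sum_(i | 0 < U s i) pi s i * U s i * (expR (eta * U s i) - 1).
Proof.
rewrite mulr_ge0 ?invr_ge0 ?(ltW (Zs_gt0 s)) //.
apply: sumr_ge0 => i U_gt0; rewrite !mulr_ge0 ?pi_ge0 ?(ltW U_gt0) //.
by rewrite subr_ge0 -expR0 ler_expR mulr_ge0 ?(ltW U_gt0).
Qed.

End SoftmaxUpdate.

Theorem lemma7 (R : realType) (S A : finType)
  (P : S -> A -> S -> R) (r : S -> A -> R) (gamma : R) (rho : S -> R)
  (pi : S -> A -> R) (eta : R)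
  (HP0 : forall s a s', 0 <= P s a s')
  (HP1 : forall s a, \sum_(s' : S) P s a s' = 1)
  (Hg0 : 0 <= gamma) (Hg1 : gamma < 1)
  (Hrho0 : forall s, 0 <= rho s) (Hrho1 : \sum_(s : S) rho s = 1)
  (Hpi0 : forall s a, 0 < pi s a) (Hpi1 : forall s, \sum_(a : A) pi s a = 1)
  (Heta : 0 < eta) :
  let pi' := pi_update P r gamma pi eta in
  let U := Adv P r gamma pi in
  Vrho P r gamma rho pi' - Vrho P r gamma rho pi =
    (1 - gamma)^-1 * \sum_(s : S) dvisit P gamma rho pi' s *
      ((Zs P r gamma pi eta s)^-1 *
       \sum_(i : A | 0 < U s i) pi s i * U s i * (expR (eta * U s i) - 1))
  /\ 0 <= Vrho P r gamma rho pi' - Vrho P r gamma rho pi.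
Proof.
move=> pi' U.
have pi_ge0 s a : 0 <= pi s a by apply: ltW.
have eta_ge0 := ltW Heta.
have pi'_ge0 s a : 0 <= pi' s a by apply: pi_update_ge0.
have pi'_sum1 s : \sum_a pi' s a = 1 by apply: pi_update_sum1.
have gain s : policy_reward U pi' s = (Zs P r gamma pi eta s)^-1 *
    \sum_(i | 0 < U s i) pi s i * U s i * (expR (eta * U s i) - 1).
  by apply: policy_reward_Adv_pi_update; apply: policy_reward_Adv_self.
have diff : Vrho P r gamma rho pi' - Vrho P r gamma rho pi =
    (1 - gamma)^-1 * \sum_s dvisit P gamma rho pi' s * policy_reward U pi' s.
  by rewrite Vrho_sub // Vrho_dvisit.
split; first by rewrite diff; under eq_bigr do rewrite gain.
rewrite diff mulr_ge0 ?invr_ge0 ?subr_ge0 ?(ltW Hg1) //.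
apply: sumr_ge0 => s _; rewrite gain mulr_ge0 ?dvisit_ge0 //.
exact: softmax_gain_ge0.
Qed.
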